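(* Let $p,q,l,N\in\mathbb{Z}_{\geq 0}$, $s=p+q$, and let $M=(M_1,\dots,M_s)\in\mathrm{Sym}_N^{p}\times\mathrm{Alt}_N^{q}$. Suppose there is a subspace $V\subseteq\mathbb{C}^N$ of dimension $2^sl$ such that $M_1V+\dots+M_sV$ has dimension $s2^sl$. Then there is $g\in\mathrm{GL}_N(\mathbb{C})$ such that for each $i\in\{1,\dots,s\}$, the $N\times l$ matrix formed by the first $l$ columns of $gM_ig^T$ has the following block form (blocks of $l$ rows each, followed by a final block of $N-(s+1)l$ rows): the first block is $0_{l\times l}$, the $(i+1)$-st block is the identity $\mathrm{Id}_l$, all other blocks of size $l\times l$ are $0$, and the final $(N-(s+1)l)\times l$ block is $0$.
   Context: $\mathrm{Sym}_N$ and $\mathrm{Alt}_N$ denote the spaces of symmetric, respectively skew-symmetric, complex $N\times N$ matrices; the first $p$ entries of $M$ are symmetric and the last $q$ are skew-symmetric. *)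

From HB Require Import structures.
From mathcomp Require Import all_boot all_order all_algebra.
Set Implicit Arguments. Unset Strict Implicit. Unset Printing Implicit Defensive.
Import Order.TTheory GRing.Theory Num.Theory.
Local Open Scope ring_scope.

(* Vectors of F^N are represented as ROW vectors; a subspace V is the row
   space of a matrix.  The image M V = {M v | v in V} (column convention)
   is the row space of  V *m M^T  in the row convention. *)
Definition image_space (F : fieldType) (N k : nat) (M : 'M[F]_N)
  (V : 'M[F]_(k, N)) : 'M[F]_(k, N) := V *m M^T.

From HB Require Import structures.
From mathcomp Require Import all_boot all_order all_algebra.
From mathcomp Require Import ring zify.
Import GRing.Theory.
Local Open Scope ring_scope.
Set Implicit Arguments. Unset Strict Implicit.

(* Over an algebraically closed field a symmetric or skew form has, inside
   any subspace of dimension 2m, an isotropic subspace of dimension m: solve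
   a quadratic for an isotropic vector, restrict to its orthogonal and split
   it off.  Halving V once for each M_i gives an l-dimensional U <= V that is
   isotropic for all M_i.  As the sum of the M_i V has the maximal dimension
   s dim V, it is direct and each M_i is injective on V, so the s l vectors
   M_i u_c (u_c a basis of U) are independent, and they are orthogonal to U.
   Hence some invertible g has rows u_c in positions c < l and sends M_i u_c
   to e_(l (i + 1) + c): complete the u_c and a dual family of the M_i u_c to
   a basis, then correct the remaining rows to annihilate every M_i u_c.
   Column c of g M_i g^T is g M_i u_c. *)

Lemma exists_nsubmx_row0 (F : fieldType) n (B : 'M[F]_n) (j0 : 'I_n) :
  row j0 B = 0 -> exists v : 'rV[F]_n, ~~ (v <= B)%MS.
Proof.
move=> B_j0; have [fullB|] := boolP (1%:M <= B)%MS; last first.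
  by case/row_subPn => k; exists (row k 1%:M).
move: B_j0; rewrite rowE => /eqP; rewrite mulmx_free_eq0; last first.
  by rewrite row_free_unit -row_full_unit -sub1mx.
by move=> /eqP/rowP/(_ j0); rewrite !mxE !eqxx => /eqP; rewrite oner_eq0.
Qed.

Section DiagMask.
Variables (F : fieldType) (N : nat).
Implicit Types (P Q : pred 'I_N).

Definition diag_mask P : 'M[F]_N := diag_mx (\row_j (P j)%:R).

Lemma diag_maskE P i j : diag_mask P i j = (P i && (i == j))%:R.
Proof. by rewrite !mxE; case: (P i); case: eqP => //= ->. Qed.

Lemma mul_diag_mask_mx P m (A : 'M[F]_(N, m)) i j :
  (diag_mask P *m A) i j = (P i)%:R * A i j.
Proof. by rewrite mul_diag_mx !mxE. Qed.

Lemma mul_mx_diag_mask P m (A : 'M[F]_(m, N)) i j :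
  (A *m diag_mask P) i j = A i j * (P j)%:R.
Proof. by rewrite mul_mx_diag !mxE. Qed.

Lemma eq_diag_mask P Q : P =1 Q -> diag_mask P = diag_mask Q.
Proof. by move=> eqPQ; apply/matrixP => i j; rewrite !diag_maskE eqPQ. Qed.

Lemma diag_maskM P Q : diag_mask P *m diag_mask Q = diag_mask (predI P Q).
Proof.
apply/matrixP => i j; rewrite mul_diag_mask_mx !diag_maskE /=.
by case: (P i); case: eqP => [->|]; rewrite ?mul1r ?mul0r ?andbF.
Qed.

Lemma diag_mask_idem P : diag_mask P *m diag_mask P = diag_mask P.
Proof. by rewrite diag_maskM; apply: eq_diag_mask => j /=; rewrite andbb. Qed.

Lemma diag_mask_subl P Q : (forall j, P j -> Q j) ->
  diag_mask P *m diag_mask Q = diag_mask P.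
Proof.
move=> sPQ; rewrite diag_maskM; apply: eq_diag_mask => j /=.
by case Pj: (P j); rewrite // sPQ.
Qed.

Lemma diag_mask_subr P Q : (forall j, Q j -> P j) ->
  diag_mask P *m diag_mask Q = diag_mask Q.
Proof.
move=> sQP; rewrite diag_maskM; apply: eq_diag_mask => j /=.
by case Qj: (Q j); rewrite ?andbF // sQP.
Qed.

Lemma diag_mask_disjoint P Q : (forall j, P j -> ~~ Q j) ->
  diag_mask P *m diag_mask Q = 0.
Proof.
move=> dPQ; apply/matrixP => i j; rewrite diag_maskM diag_maskE mxE /=.
by case Pi: (P i); rewrite //= (negbTE (dPQ i Pi)).
Qed.

Lemma diag_maskU P Q : (forall j, P j -> ~~ Q j) ->
  diag_mask (predU P Q) = diag_mask P + diag_mask Q.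
Proof.
move=> dPQ; apply/matrixP => i j; rewrite [RHS]mxE !diag_maskE /=.
case Pi: (P i); last by rewrite add0r.
by rewrite (negbTE (dPQ i Pi)) addr0.
Qed.

Lemma tr_diag_mask P : (diag_mask P)^T = diag_mask P.
Proof. exact: tr_diag_mx. Qed.

Lemma diag_mask_full P : (forall j, P j) -> diag_mask P = 1%:M.
Proof. by move=> allP; apply/matrixP => i j; rewrite diag_maskE !mxE allP. Qed.

Definition rows_free_on P (A : 'M[F]_N) :=
  forall a : 'rV[F]_N, a *m diag_mask P = a -> a *m A = 0 -> a = 0.

Lemma rows_free_on_full P A : (forall j, P j) -> rows_free_on P A ->
  A \in unitmx.
Proof.
move=> allP freeA; rewrite -row_free_unit; apply: inj_row_free => a aA0.
by apply: freeA; rewrite // diag_mask_full // mulmx1.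
Qed.

Lemma rows_free_on_extend P A (j0 : 'I_N) : ~~ P j0 -> rows_free_on P A ->
  exists A', diag_mask P *m A' = diag_mask P *m A /\
             rows_free_on (predU1 j0 P) A'.
Proof.
move=> Pj0 freeA; set B := diag_mask P *m A.
have [v vB] : exists v : 'rV[F]_N, ~~ (v <= B)%MS.
  apply: (@exists_nsubmx_row0 _ _ _ j0); apply/rowP => j.
  by rewrite mxE /B mul_diag_mask_mx (negbTE Pj0) mul0r mxE.
set A' := \matrix_(i, j) (if i == j0 then v 0 j else A i j).
have PA' : diag_mask P *m A' = B.
  apply/matrixP => i j; rewrite !mul_diag_mask_mx !mxE.
  by case: eqP => [->|//]; rewrite (negbTE Pj0) !mul0r.
exists A'; split => // a a_supp aA'0.
set b := a *m diag_mask P.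
have a_split : a = b + a 0 j0 *: delta_mx 0 j0.
  have dj0P : forall j, pred1 j0 j -> ~~ P j by move=> j /eqP ->.
  have -> : a 0 j0 *: delta_mx 0 j0 = a *m diag_mask (pred1 j0).
    apply/rowP => j; rewrite mul_mx_diag_mask !mxE eqxx /=.
    by case: eqP => [->|]; rewrite ?mulr0 ?mulr1.
  by rewrite /b -mulmxDr addrC -diag_maskU // -{1}a_supp.
have bA' : b *m A' = b *m B.
  by rewrite /b -!mulmxA PA' /B !mulmxA -[a *m _ *m diag_mask P]mulmxA diag_mask_idem.
have j0A' : (delta_mx 0 j0 : 'rV[F]_N) *m A' = v.
  by rewrite -rowE; apply/rowP => j; rewrite !mxE eqxx.
move: aA'0; rewrite {1}a_split mulmxDl -scalemxAl bA' j0A' => sum0.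
have a_j0 : a 0 j0 = 0.
  apply: contraNeq vB => a_j0; apply/negPn.
  have -> : v = - (a 0 j0)^-1 *: (b *m B).
    apply: (scalerI a_j0); rewrite scalerA mulrN mulfV // scaleN1r.
    by apply/eqP; rewrite -addr_eq0 addrC sum0.
  by rewrite scalemx_sub // submxMl.
have b_supp : b *m diag_mask P = b by rewrite -mulmxA diag_mask_idem.
have b0 : b = 0.
  apply: freeA => //; move: sum0; rewrite a_j0 scale0r addr0 /B mulmxA.
  by rewrite b_supp.
by rewrite a_split b0 a_j0 scale0r addr0.
Qed.

Lemma rows_free_on_completion P A : rows_free_on P A ->
  exists2 h : 'M[F]_N, h \in unitmx & diag_mask P *m h = diag_mask P *m A.
Proof.
move: {2}#|[predC P]| (leqnn #|[predC P]|) => n.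
elim: n P A => [|n IH] P A cardP freeA;
  have [/existsP [j0 Pj0] | /existsPn allP] := boolP [exists j, ~~ P j];
  try by exists A => //; apply: (rows_free_on_full _ freeA) => j; apply/negPn.
  by move: cardP; rewrite (cardD1 j0) inE Pj0.
have [A' [PA' freeA']] := rows_free_on_extend Pj0 freeA.
have [|h unit_h Uh] := IH (predU1 j0 P) A' _ freeA'.
  move: cardP; rewrite (cardD1 j0) inE Pj0 add1n ltnS; apply: leq_trans.
  by apply: subset_leq_card; apply/subsetP => j; rewrite !inE negb_or => /andP [-> ->].
exists h => //.
have sub_P j : P j -> predU1 j0 P j by rewrite /= => ->; rewrite orbT.
by rewrite -(diag_mask_subl sub_P) -mulmxA Uh mulmxA (diag_mask_subl sub_P).
Qed.
End DiagMask.
Arguments diag_mask {F N} P.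

Lemma mulmx_tr_entry (F : fieldType) m n p (A : 'M[F]_(m, n)) (B : 'M[F]_(p, n))
  r c : (A *m B^T) r c = (row r A *m (row c B)^T) 0 0.
Proof. by rewrite !mxE; apply: eq_bigr => k _; rewrite !mxE. Qed.

Section Isotropic.
Variables (F : closedFieldType) (N : nat).
Implicit Types (A W : 'M[F]_N) (x y w : 'rV[F]_N).

Definition isotropic A W :=
  forall x y, (x <= W)%MS -> (y <= W)%MS -> x *m A *m y^T = 0.

Lemma isotropicS A W W' : (W' <= W)%MS -> isotropic A W -> isotropic A W'.
Proof. by move=> sW'W isoW x y xW' yW'; apply: isoW; apply: submx_trans sW'W. Qed.

Lemma isotropic_mx A W (U : 'M[F]_N) : isotropic A W -> (U <= W)%MS ->
  U *m A *m U^T = 0.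
Proof.
move=> isoW sUW; apply/matrixP => r c; rewrite [RHS]mxE.
by rewrite mulmx_tr_entry row_mul isoW ?mxE // (submx_trans (row_sub _ _)).
Qed.

Lemma quadratic_root (a b c : F) : c != 0 ->
  exists t, a + t * b + t ^+ 2 * c = 0.
Proof.
move=> c0; have [t] := @solve_monicpoly F 2 (fun i => - [:: a; b]`_i / c) isT.
rewrite !big_ord_recl big_ord0 /= => root_t.
by exists t; rewrite root_t; field.
Qed.
Lemma isotropic_vector A W : (2 <= \rank W)%N ->
  exists w, [/\ (w <= W)%MS, w != 0 & w *m A *m w^T = 0].
Proof.
move=> rW; set B := row_base W.
have B_free := row_base_free W.
have sBW : forall i, (row i B <= W)%MS.
  by move=> i; rewrite (submx_trans (row_sub i B)) ?eq_row_base.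
pose i0 : 'I_(\rank W) := Ordinal (ltnW rW).
pose i1 : 'I_(\rank W) := Ordinal rW.
set a := row i0 B; set b := row i1 B.
have [bb0|bb_neq0] := eqVneq (b *m A *m b^T) 0.
  exists b; split; [exact: sBW | | exact: bb0].
  rewrite /b rowE mulmx_free_eq0 //.
  by apply/eqP => /rowP/(_ i1); rewrite !mxE !eqxx => /eqP; rewrite oner_eq0.
have ga_neq0 : (b *m A *m b^T) 0 0 != 0.
  apply: contraNneq bb_neq0 => bb.
  by apply/eqP/matrixP => i j; rewrite !ord1 bb mxE.
have [t qt] := quadratic_root ((a *m A *m a^T) 0 0)
  ((a *m A *m b^T + b *m A *m a^T) 0 0) ga_neq0.
exists (a + t *: b); split.
- by rewrite addmx_sub ?scalemx_sub ?sBW.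
- rewrite /a /b !rowE scalemxAl -mulmxDl mulmx_free_eq0 //.
  apply/eqP => /rowP/(_ i0); rewrite !mxE !eqxx (_ : i0 == i1 = false) //=.
  by rewrite mulr0 addr0 => /eqP; rewrite oner_eq0.
- apply/matrixP => i j; rewrite !ord1 [RHS]mxE -{}qt.
  rewrite linearD /= linearZ /= !mulmxDl !mulmxDr -!scalemxAl -!scalemxAr.
  by rewrite !mxE; ring.
Qed.

Definition symmetric_or_skew A := A^T = A \/ A^T = - A.

Lemma orthogonal_sym A x y : symmetric_or_skew A ->
  x *m A *m y^T = 0 -> y *m A *m x^T = 0.
Proof.
move=> symA xy0; apply: trmx_inj; rewrite trmx0 !trmx_mul trmxK mulmxA.
by case: symA => ->; rewrite ?mulmxN ?mulNmx xy0 ?oppr0.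
Qed.

Lemma isotropic_addsmx A W w : symmetric_or_skew A -> isotropic A W ->
  (W <= kermx (A *m w^T))%MS -> w *m A *m w^T = 0 -> isotropic A (W + w)%MS.
Proof.
move=> symA isoW sWK ww0.
have xw0 x (c : 'M[F]_1) : (x <= W)%MS -> x *m A *m (c *m w)^T = 0.
  move=> xW; rewrite trmx_mul mulmxA -(mulmxA x).
  by move/sub_kermxP: (submx_trans xW sWK) ->; rewrite mul0mx.
move=> x y /sub_addsmxP [[x1 x2] ->] /sub_addsmxP [[y1 y2] ->] /=.
rewrite linearD /= !mulmxDl !mulmxDr isoW ?submxMl // xw0 ?submxMl //.
rewrite (orthogonal_sym symA (xw0 _ _ _)) ?submxMl //.
by rewrite trmx_mul !mulmxA -(mulmxA _ w) -(mulmxA _ _ w^T) ww0 mulmx0 mul0mx !addr0.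
Qed.

(* Each step trades two dimensions of [W] for one isotropic vector [w]:
   cutting [W] down to the [A]-orthogonal of [w] loses at most one dimension,
   and splitting off the line of [w] one more. *)
Lemma isotropic_half A m W : symmetric_or_skew A -> (2 * m <= \rank W)%N ->
  exists W', [/\ (W' <= W)%MS, isotropic A W' & (m <= \rank W')%N].
Proof.
move=> symA; elim: m W => [|m IH] W rW.
  exists 0; split; rewrite ?sub0mx // => x y; rewrite submx0 => /eqP -> _.
  by rewrite !mul0mx.
have /(isotropic_vector A) [w [wW w0 ww0]] : (2 <= \rank W)%N by lia.
set K := kermx (A *m w^T); set W1 := (W :&: K)%MS; set W2 := (W1 :&: w^C)%MS.
have rW1 : (\rank W <= \rank W1 + 1)%N.
  have := mxrank_sum_cap W K; have := rank_leq_col (W + K)%MS.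
  have := mxrank_ker (A *m w^T); have := rank_leq_col (A *m w^T).
  rewrite -/K -/W1; lia.
have rW2 : (\rank W1 <= \rank W2 + 1)%N.
  have := mxrank_sum_cap W1 (w^C)%MS; have := rank_leq_col (W1 + w^C)%MS.
  have := mxrank_compl w; rewrite rank_rV w0 -/W2; lia.
have /IH [W3 [sW3 isoW3 rW3]] : (2 * m <= \rank W2)%N by lia.
have sW3W1 : (W3 <= W1)%MS by apply: submx_trans sW3 (capmxSl _ _).
exists (W3 + w)%MS; split.
- by rewrite addsmx_sub wW andbT (submx_trans sW3W1) ?capmxSl.
- by apply: isotropic_addsmx; rewrite // (submx_trans sW3W1) ?capmxSr.
- have : (W3 :&: w <= (0 : 'M[F]_N))%MS.
    by rewrite -(capmx_compl w) capmxC capmxS // (submx_trans sW3) ?capmxSr.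
  rewrite submx0 => /eqP W3w0; have := mxrank_sum_cap W3 w.
  rewrite W3w0 mxrank0 rank_rV w0; lia.
Qed.

Lemma common_isotropic s (M : 'I_s -> 'M[F]_N) l W :
  (forall i, symmetric_or_skew (M i)) -> (2 ^ s * l <= \rank W)%N ->
  exists U, [/\ (U <= W)%MS, (l <= \rank U)%N & forall i, isotropic (M i) U].
Proof.
move=> symM.
suff prefix : forall n (V : 'M[F]_N), (n <= s)%N -> (2 ^ n * l <= \rank V)%N ->
    exists U, [/\ (U <= V)%MS, (l <= \rank U)%N &
               forall i : 'I_s, (i < n)%N -> isotropic (M i) U].
  move=> /(prefix s W (leqnn s)) [U [sUW rU isoU]].
  by exists U; split => // i; apply: isoU.
elim=> [|n IH] V ns rV; first by rewrite expn0 mul1n in rV; exists V; split.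
have /(isotropic_half (symM (Ordinal ns))) [W' [sW'V isoW' rW']] :
  (2 * (2 ^ n * l) <= \rank V)%N by rewrite mulnA -expnS.
have [U [sUW' rU isoU]] := IH W' (ltnW ns) rW'.
exists U; split => //; first exact: submx_trans sW'V.
move=> i; rewrite ltnS leq_eqVlt => /orP [/eqP i_n | /isoU //].
by apply: isotropicS sUW' _; have -> : i = Ordinal ns by apply: val_inj.
Qed.
End Isotropic.

Section DirectImages.
Variables (F : fieldType) (N : nat).

Lemma sub_mulmx_eq0 k (V : 'M[F]_(k, N)) (X : 'M[F]_N) (v : 'rV[F]_N) :
  \rank (V *m X) = \rank V -> (v <= V)%MS -> v *m X = 0 -> v = 0.
Proof.
move=> rVX; rewrite -(eq_row_base V) => /submxP [c ->].
have free_baseX : row_free (row_base V *m X).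
  by rewrite /row_free (eqmxMr X (eq_row_base V)) rVX.
by rewrite -mulmxA => /eqP; rewrite mulmx_free_eq0 // => /eqP ->; rewrite mul0mx.
Qed.

(* If the images [V X_i] have the largest possible total rank, their sum is
   direct and each [X_i] is injective on [V]. *)
Lemma direct_images_free k (V : 'M[F]_(k, N)) s (X : 'I_s -> 'M[F]_N) :
  \rank (\sum_i <<V *m X i>>)%MS = (s * \rank V)%N ->
  forall v : 'I_s -> 'rV[F]_N, (forall i, (v i <= V)%MS) ->
  \sum_i v i *m X i = 0 -> forall i, v i = 0.
Proof.
move=> rsum v vV sum0 i.
have rVX j : (\rank <<V *m X j>>%MS <= \rank V)%N by rewrite genmxE mxrankM_maxl.
have rsum_le : (\rank (\sum_i <<V *m X i>>)%MS
    <= \sum_i \rank <<V *m X i>>%MS ?= iff mxdirect (\sum_i <<V *m X i>>)%MS)%N.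
  exact: mxrank_sum_leqif.
have := leqif_trans rsum_le (leqif_sum (fun j _ => leqif_eq (rVX j))).
rewrite /= sum_nat_const card_ord rsum => -[_].
rewrite eqxx => /esym/andP [dsum /forallP rVXi].
apply: (@sub_mulmx_eq0 _ V (X i) _ _ (vV i)).
  by move: (rVXi i); rewrite /= genmxE => /eqP.
apply/eqP; rewrite -submx0; move/mxdirect_sumsP: dsum => /(_ i isT) <-.
rewrite sub_capmx genmxE submxMr //=.
have -> : v i *m X i = - \sum_(j | j != i) v j *m X j.
  by apply/eqP; rewrite -addr_eq0; move: sum0; rewrite (bigD1 i) //= => ->.
rewrite eqmx_opp; apply: summx_sub => j ji.
by rewrite (sumsmx_sup j) // genmxE submxMr.
Qed.
End DirectImages.

Section AdaptedBasis.
Variables (F : fieldType) (N : nat) (L S : pred 'I_N) (U X : 'M[F]_N).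
Notation DL := (diag_mask L : 'M[F]_N).
Notation DS := (diag_mask S : 'M[F]_N).
Hypotheses (disj_LS : forall j, L j -> ~~ S j)
  (supp_U : DL *m U = U) (free_U : rows_free_on L U)
  (supp_X : DS *m X = X) (free_X : rows_free_on S X) (UX0 : U *m X^T = 0).

Let DLS : DL *m DS = 0. Proof. exact: diag_mask_disjoint. Qed.
Let DSL : DS *m DL = 0.
Proof. by apply: diag_mask_disjoint => j Sj; apply: contraL Sj => /disj_LS. Qed.

Let XtS : X^T *m DS = X^T.
Proof. by rewrite -supp_X trmx_mul tr_diag_mask -mulmxA diag_mask_idem. Qed.

Let dual_X : exists2 Y : 'M[F]_N, DS *m Y = Y & Y *m X^T = DS.
Proof.
have [h unit_h hX] := rows_free_on_completion free_X; rewrite supp_X in hX.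
exists (DS *m (invmx h)^T); first by rewrite mulmxA diag_mask_idem.
rewrite -hX trmx_mul tr_diag_mask !mulmxA -(mulmxA DS) -trmx_mul mulmxV //.
by rewrite trmx1 mulmx1 diag_mask_idem.
Qed.

Let completion_with_dual Y : DS *m Y = Y -> Y *m X^T = DS ->
  exists2 g0, g0 \in unitmx & DL *m g0 = U /\ DS *m g0 = Y.
Proof.
move=> supp_Y YX; set LS := predU L S.
have DLS_DL : diag_mask LS *m DL = DL by apply: diag_mask_subr => j /= ->.
have DLS_DS : diag_mask LS *m DS = DS.
  by apply: diag_mask_subr => j Sj; rewrite /= Sj orbT.
have DL_DLS : DL *m diag_mask LS = DL by apply: diag_mask_subl => j /= ->.
have DS_DLS : DS *m diag_mask LS = DS.
  by apply: diag_mask_subl => j Sj; rewrite /= Sj orbT.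
have free_UY : rows_free_on LS (U + Y).
  move=> a a_supp aUY0.
  have aS0 : a *m DS = 0.
    have := congr1 (mulmx^~ X^T) aUY0.
    by rewrite mul0mx mulmxDr mulmxDl -!mulmxA UX0 YX mulmx0 add0r.
  have a_supp' : a *m DL = a by rewrite -{2}a_supp diag_maskU // mulmxDr aS0 addr0.
  apply: free_U => //; move: aUY0.
  by rewrite mulmxDr -supp_Y mulmxA aS0 mul0mx addr0.
have [g0 unit_g0] := rows_free_on_completion free_UY.
have -> : diag_mask LS *m (U + Y) = U + Y.
  by rewrite mulmxDr -supp_U -supp_Y !mulmxA DLS_DL DLS_DS.
move=> g0_LS; exists g0 => //; split.
- by rewrite -DL_DLS -mulmxA g0_LS mulmxDr supp_U -supp_Y mulmxA DLS mul0mx addr0.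
- by rewrite -DS_DLS -mulmxA g0_LS mulmxDr -supp_U mulmxA DSL mul0mx add0r.
Qed.

Lemma adapted_unitmx :
  exists g, [/\ g \in unitmx, g *m X^T = DS & DL *m g = U].
Proof.
have [Y supp_Y YX] := dual_X.
have [g0 unit_g0 [DL_g0 DS_g0]] := completion_with_dual supp_Y YX.
(* Subtracting from each row of [g0] its [Y]-expansion along [X] makes it
   orthogonal to [X] without touching the rows in [L] and [S]. *)
set g := g0 - (g0 *m X^T - DS) *m Y.
have DS_g : DS *m g = Y.
  rewrite /g mulmxBr DS_g0 mulmxA mulmxBr mulmxA DS_g0 YX diag_mask_idem.
  by rewrite subrr mul0mx subr0.
exists g; split.
- have g0E : g0 = (1%:M + (g0 *m X^T - DS) *m DS) *m g.
    by rewrite mulmxDl mul1mx -mulmxA DS_g /g subrK.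
  by move: unit_g0; rewrite g0E unitmx_mul => /andP [].
- by rewrite /g mulmxBl -mulmxA YX mulmxBl -mulmxA XtS diag_mask_idem opprB addrC subrK.
- by rewrite /g mulmxBr DL_g0 mulmxA mulmxBr DLS mulmxA DL_g0 UX0 subrr mul0mx subr0.
Qed.
End AdaptedBasis.

Section BlockIndex.
Variables (l s : nat).

Lemma block_index_inj i i' c c' : (c < l)%N -> (c' < l)%N ->
  (l * i.+1 + c = l * i'.+1 + c')%N -> i = i' /\ c = c'.
Proof.
move=> cl c'l e; have l0 : (0 < l)%N by apply: leq_ltn_trans cl.
have := congr1 (divn^~ l) e; have := congr1 (modn^~ l) e.
rewrite ![(l * _)%N]mulnC !modnMDl !divnMDl // !modn_small // !divn_small //.
by rewrite !addn0 => -> [->].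
Qed.

Lemma block_index_bounds i c : (i < s)%N -> (c < l)%N ->
  (l <= l * i.+1 + c < l * s.+1)%N.
Proof. by move=> lt_is lt_cl; apply/andP; split; nia. Qed.

Lemma block_index_decomp j : (l <= j < l * s.+1)%N ->
  exists2 i, (i < s)%N & exists2 c, (c < l)%N & j = (l * i.+1 + c)%N.
Proof.
case/andP=> lj js; have l0 : (0 < l)%N by case: l lj js => //; rewrite mul0n.
exists ((j - l) %/ l)%N; first by rewrite ltn_divLR //; nia.
exists ((j - l) %% l)%N; first by rewrite ltn_pmod.
by have := divn_eq (j - l)%N l; nia.
Qed.
End BlockIndex.

Section StackedImages.
Variables (F : fieldType) (N l s : nat) (M : 'I_s -> 'M[F]_N) (U : 'M[F]_N).

Definition first_rows : pred 'I_N := [pred j : 'I_N | (j < l)%N].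
Definition image_rows : pred 'I_N := [pred j : 'I_N | (l <= j < l * s.+1)%N].

Lemma first_image_rows_disjoint j : first_rows j -> ~~ image_rows j.
Proof. by rewrite /first_rows /image_rows !inE => jl; rewrite leqNgt jl. Qed.

Definition block_shift (i : nat) : 'M[F]_N :=
  \matrix_(j, c) ((j == (l * i.+1 + c)%N :> nat) && (c < l)%N)%:R.

(* Row [l * (i + 1) + c] holds [u_c M_i^T], [u_c] the [c]-th row of [U], i.e. the
   column [M_i u_c] that [g] must send to the basis vector [e_(l * (i + 1) + c)]. *)
Definition stacked_images : 'M[F]_N := \sum_(i < s) block_shift i *m U *m (M i)^T.

Lemma row_block_shift i' (i : 'I_s) (c j : 'I_N) : (c < l)%N ->
  j = (l * i.+1 + c)%N :> nat ->
  row j (block_shift i') = if i' == i then delta_mx 0 c else 0.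
Proof.
move=> cl jE; apply/rowP => c'; rewrite !mxE jE.
case: (boolP (c' < l)%N) => c'l; last first.
  have c'c : (c' == c) = false by apply: contraNF c'l => /eqP ->.
  by rewrite andbF; case: ifP; rewrite !mxE ?eqxx ?c'c.
rewrite andbT; case: (eqVneq i' i) => [->|i'i]; rewrite mxE ?eqxx /=.
  by rewrite eqn_add2l eq_sym.
by case: eqP => // /block_index_inj [] // e; rewrite e eqxx in i'i.
Qed.

Lemma row_stacked_images (i : 'I_s) (c j : 'I_N) : (c < l)%N ->
  j = (l * i.+1 + c)%N :> nat -> row j stacked_images = row c U *m (M i)^T.
Proof.
move=> cl jE; rewrite rowE mulmx_sumr (bigD1 i) //= big1 => [|i' i'i].
  by rewrite !mulmxA -rowE (row_block_shift _ cl jE) eqxx -rowE addr0.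
by rewrite !mulmxA -rowE (row_block_shift _ cl jE) val_eqE (negbTE i'i) !mul0mx.
Qed.

Lemma image_rows_block_shift (i : 'I_s) :
  diag_mask image_rows *m block_shift i = block_shift i.
Proof.
apply/matrixP => j c; rewrite mul_diag_mask_mx [block_shift _ _ _]mxE.
case: eqP => [jE|]; last by rewrite mulr0.
case: (boolP (c < l)%N) => cl; last by rewrite mulr0.
by rewrite /image_rows inE /= jE block_index_bounds ?mul1r.
Qed.

Lemma block_shift_first_rows i :
  block_shift i *m diag_mask first_rows = block_shift i.
Proof.
apply/matrixP => j c; rewrite mul_mx_diag_mask [block_shift _ _ _]mxE /first_rows inE /=.
by case: (c < l)%N; rewrite ?andbF ?mulr1 ?mul0r.
Qed.

Lemma image_rows_stacked_images :
  diag_mask image_rows *m stacked_images = stacked_images.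
Proof.
by rewrite mulmx_sumr; apply: eq_bigr => i _; rewrite !mulmxA image_rows_block_shift.
Qed.

Lemma stacked_images_orthogonal : (forall i, U *m M i *m U^T = 0) ->
  U *m stacked_images^T = 0.
Proof.
move=> isoU; apply: trmx_inj; rewrite trmx_mul trmxK trmx0 mulmx_suml big1 // => i _.
have /(congr1 trmx) : U *m M i *m U^T = 0 := isoU i.
by rewrite !trmx_mul trmxK trmx0 -!mulmxA => ->; rewrite mulmx0.
Qed.

Lemma stacked_images_free : rows_free_on first_rows U ->
  (forall v : 'I_s -> 'rV[F]_N, (forall i, (v i <= U)%MS) ->
     \sum_i v i *m (M i)^T = 0 -> forall i, v i = 0) ->
  rows_free_on image_rows stacked_images.
Proof.
move=> free_U free_images a a_supp a0.
have a_shift0 (i : 'I_s) : a *m block_shift i = 0.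
  apply: free_U; first by rewrite -mulmxA block_shift_first_rows.
  move: i; apply: (free_images (fun i => a *m block_shift i *m U)) => [i|].
    exact: submxMl.
  by rewrite -[RHS]a0 mulmx_sumr; apply: eq_bigr => i _; rewrite !mulmxA.
apply/rowP => j; rewrite mxE; move/rowP: a_supp => /(_ j) <-.
rewrite mul_mx_diag_mask; case: (boolP (image_rows j)) => [Sj|]; last first.
  by rewrite mulr0.
have [i lt_is [c cl jE]] := block_index_decomp Sj.
have cN : (c < N)%N by have := ltn_ord j; rewrite jE; lia.
move/rowP: (a_shift0 (Ordinal lt_is)) => /(_ (Ordinal cN)).
rewrite !mxE (bigD1 j) //= big1 => [|j' j'j]; rewrite mxE.
  by rewrite /= -jE eqxx cl mulr1 addr0 => ->.
by rewrite /= -jE val_eqE (negbTE j'j) mulr0.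
Qed.

Lemma stacked_basis_entry (g : 'M[F]_N) (i : 'I_s) (r c : 'I_N) :
  (l * s.+1 <= N)%N -> (c < l)%N ->
  g *m stacked_images^T = diag_mask image_rows -> diag_mask first_rows *m g = U ->
  (g *m M i *m g^T) r c = if nat_of_ord r == (l * i.+1 + c)%N then 1 else 0.
Proof.
move=> lsN cl gX Lg; have jN : (l * i.+1 + c < N)%N by have := ltn_ord i; nia.
have row_g : row c g = row c U.
  by apply/rowP => k; rewrite -Lg mxE [RHS]mxE mul_diag_mask_mx /first_rows inE cl mul1r.
have MiU : M i *m (row c g)^T = (row (Ordinal jN) stacked_images)^T.
  by rewrite (@row_stacked_images i c (Ordinal jN)) // row_g trmx_mul trmxK.
rewrite mulmx_tr_entry row_mul -mulmxA MiU -mulmx_tr_entry gX diag_maskE.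
rewrite -val_eqE /=; case: eqP => [rE|]; last by rewrite andbF.
by rewrite andbT /image_rows inE /= rE block_index_bounds.
Qed.
End StackedImages.

Lemma first_rows_basis (F : fieldType) N l (W : 'M[F]_N) : (l <= \rank W)%N ->
  exists U, [/\ (U <= W)%MS, diag_mask (@first_rows N l) *m U = U &
               rows_free_on (@first_rows N l) U].
Proof.
move=> lW; set L := @first_rows N l.
set T : 'M[F]_(N, \rank W) := \matrix_(j, k) (j == k :> nat)%:R.
exists (diag_mask L *m T *m row_base W); split.
- by rewrite (submx_trans (submxMl _ _)) ?eq_row_base.
- by rewrite !mulmxA diag_mask_idem.
move=> a a_supp aU0.
have aT0 : a *m T = 0.
  apply/eqP; rewrite -(mulmx_free_eq0 _ (row_base_free W)).
  by rewrite -a_supp -!mulmxA (mulmxA (diag_mask L)) aU0.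
apply/rowP => j; rewrite [RHS]mxE; move/rowP: a_supp => /(_ j) <-.
rewrite mul_mx_diag_mask; case: (boolP (L j)) => [Lj|]; last by rewrite mulr0.
have jW : (j < \rank W)%N by apply: leq_trans lW.
move/rowP: aT0 => /(_ (Ordinal jW)); rewrite !mxE (bigD1 j) //= big1 => [|j' j'j].
  by rewrite !mxE eqxx mulr1 addr0 => ->.
by rewrite !mxE /= val_eqE (negbTE j'j) mulr0.
Qed.

Theorem lemma3p7 (F : numClosedFieldType) (p q l N : nat)
  (M : 'I_(p + q) -> 'M[F]_N)
  (hSym : forall i : 'I_(p + q), (i < p)%N -> (M i)^T = M i)
  (hAlt : forall i : 'I_(p + q), (p <= i)%N -> (M i)^T = - M i)
  (k : nat) (V : 'M[F]_(k, N))
  (hV : \rank V = (2 ^ (p + q) * l)%N)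
  (hsum : \rank (\sum_(i < p + q) <<image_space (M i) V>>)%MS
          = ((p + q) * 2 ^ (p + q) * l)%N) :
  exists g : 'M[F]_N, g \in unitmx /\
    forall (i : 'I_(p + q)) (r c : 'I_N), (c < l)%N ->
      (g *m M i *m g^T) r c
      = (if nat_of_ord r == (l * i.+1 + c)%N then 1 else 0).
Proof.
set s := (p + q)%N in M hSym hAlt hV hsum *.
have symM i : symmetric_or_skew (M i).
  by case: (ltnP i p) => ip; [left; apply: hSym | right; apply: hAlt].
have /(common_isotropic symM) [W [sWV rW isoW]] : (2 ^ s * l <= \rank <<V>>)%N.
  by rewrite genmxE hV.
have [U [sUW supp_U free_U]] := first_rows_basis rW.
have sUV : (U <= V)%MS by rewrite -(genmxE V) (submx_trans sUW).
have free_images : forall v : 'I_s -> 'rV[F]_N, (forall i, (v i <= U)%MS) ->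
    \sum_i v i *m (M i)^T = 0 -> forall i, v i = 0.
  move=> v vU; apply: direct_images_free => [|i]; last exact: submx_trans (vU i) sUV.
  by rewrite hV mulnA.
have [g [unit_g gX Lg]] := adapted_unitmx (@first_image_rows_disjoint N l s)
  supp_U free_U
  (image_rows_stacked_images l M U) (stacked_images_free free_U free_images)
  (stacked_images_orthogonal l (fun i => isotropic_mx (isoW i) sUW)).
exists g; split=> // i r c cl.
have lsN : (l * s.+1 <= N)%N.
  have := rank_leq_col (\sum_(i < s) <<image_space (M i) V>>)%MS.
  by rewrite hsum; have := ltn_expl s (isT : 1 < 2)%N; have := ltn_ord i; nia.
exact: stacked_basis_entry lsN cl gX Lg.
Qed.
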